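(* Let $P=(X,\prec)$ be a finite twin-free poset that is a unit OC interval order. Then $P$ contains none of the following six posets as an induced subposet: $\mathbf{4}+\mathbf{1}$, $\mathbf{3}+\mathbf{1}+\mathbf{1}$, $Z$, $D$, $Y$, and the dual of $Y$.
   Context: Posets $P=(X,\prec)$ are strict (irreflexive) partial orders; $x\parallel y$ means $x,y$ are incomparable. An induced subposet is a subset of $X$ with the restricted order. Two points are twins if they have exactly the same comparabilities (same set of elements below and same set of elements above); $P$ is twin-free if it has no two distinct twins. An OC interval representation of $P$ assigns to each $x\in X$ a real interval $I(x)$ that is either open or closed, such that $x\prec y$ if and only if every point of $I(x)$ is less than every point of $I(y)$. $P$ is a unit OC interval order if it has an OC interval representation in which all intervals have the same length. The posets (all pairs not listed as comparable, nor implied by transitivity, are incomparable): $\mathbf{4}+\mathbf{1}$ has elements $a,b,c,d,x$ with $a\prec b\prec c\prec d$ and $x$ incomparable to all. $\mathbf{3}+\mathbf{1}+\mathbf{1}$ has elements $a,b,c,x,y$ with $a\prec b\prec c$ and $x,y$ incomparable to everything. $Z$ has elements $a,b,c,d,x,y$ with $a\prec b\prec c\prec d$, $x\prec d$, $a\prec y$. $D$ has elements $a,b,c,d,x$ with $a\prec b\prec d$, $a\prec c\prec d$. $Y$ has elements $a,b,c,d,x$ with $a\prec d\prec b$ and $a\prec d\prec c$. The dual of a poset is obtained by reversing all comparabilities. *)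

From mathcomp Require Import all_boot all_order all_algebra.
From mathcomp Require Import reals.
Set Implicit Arguments. Unset Strict Implicit. Unset Printing Implicit Defensive.
Import Order.TTheory GRing.Theory Num.Theory.
Local Open Scope ring_scope.

Definition strict_poset (T : finType) (lt : rel T) : Prop :=
  irreflexive lt /\ transitive lt.

Definition twins (T : finType) (lt : rel T) (x y : T) : Prop :=
  forall z, lt z x = lt z y /\ lt x z = lt y z.

Definition twin_free (T : finType) (lt : rel T) : Prop :=
  forall x y, x <> y -> ~ twins lt x y.

(* An interval (a, b, c): left endpoint a, right endpoint b, closed iff c. *)
Definition interval_mem (R : realType) (I : R * R * bool) (t : R) : bool :=
  let: (a, b, c) := I in
  if c then (a <= t) && (t <= b) else (a < t) && (t < b).

Definition interval_length (R : realType) (I : R * R * bool) : R :=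
  I.1.2 - I.1.1.

Definition OC_rep (R : realType) (T : finType) (lt : rel T)
    (I : T -> R * R * bool) : Prop :=
  (forall x, (I x).1.1 <= (I x).1.2) /\
  (forall x y, lt x y <->
     (forall s t, interval_mem (I x) s -> interval_mem (I y) t -> s < t)).

Definition unit_OC_interval_order (R : realType) (T : finType) (lt : rel T)
    : Prop :=
  exists (I : T -> R * R * bool) (l : R),
    OC_rep lt I /\ forall x, interval_length (I x) = l.

Definition contains_induced (T : finType) (lt : rel T) (k : nat)
    (pat : rel 'I_k) : Prop :=
  exists f : 'I_k -> T, injective f /\ forall u v, lt (f u) (f v) = pat u v.

Arguments contains_induced : clear implicits.
Arguments contains_induced {T} lt {k} pat.
Definition rel_of_pairs (k : nat) (s : seq (nat * nat)) : rel 'I_k :=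
  fun u v => (nat_of_ord u, nat_of_ord v) \in s.

(* 4+1 : a=0<b=1<c=2<d=3, x=4 isolated *)
Definition pat_4_1 : rel 'I_5 :=
  @rel_of_pairs 5 [:: (0,1); (0,2); (0,3); (1,2); (1,3); (2,3)]%N.
(* 3+1+1 : a=0<b=1<c=2, x=3, y=4 isolated *)
Definition pat_3_1_1 : rel 'I_5 :=
  @rel_of_pairs 5 [:: (0,1); (0,2); (1,2)]%N.
(* Z : a=0<b=1<c=2<d=3, x=4<d, a<y=5 *)
Definition pat_Z : rel 'I_6 :=
  @rel_of_pairs 6 [:: (0,1); (0,2); (0,3); (1,2); (1,3); (2,3); (4,3); (0,5)]%N.
(* D : a=0<b=1<d=3, a<c=2<d, x=4 isolated *)
Definition pat_D : rel 'I_5 :=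
  @rel_of_pairs 5 [:: (0,1); (0,2); (0,3); (1,3); (2,3)]%N.
(* Y : a=0<d=3<b=1, a<d<c=2, x=4 isolated *)
Definition pat_Y : rel 'I_5 :=
  @rel_of_pairs 5 [:: (0,3); (3,1); (3,2); (0,1); (0,2)]%N.
Definition pat_Ydual : rel 'I_5 := fun u v => pat_Y v u.

From mathcomp Require Import all_boot all_order all_algebra.
From mathcomp Require Import reals.
From mathcomp Require Import lra.
Set Implicit Arguments. Unset Strict Implicit. Unset Printing Implicit Defensive.
Import Order.TTheory GRing.Theory Num.Theory.
Local Open Scope ring_scope.

(* In a unit OC representation with interval length l, let p x be the left
   endpoint of the interval of x.  Then x precedes y exactly when
   p x + l <= p y, with equality allowed unless both intervals are closed.
   In each of the six posets the comparabilities and incomparabilities give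
   chains of such inequalities that collapse to equalities, so that some
   intervals touch at an endpoint.  The open/closed flags at the touching
   points are then contradictory, or give two distinct elements the same
   interval, making them twins.  The dual of Y reduces to Y by reflecting the
   real line. *)

Section Intervals.
Variable R : realType.
Implicit Types (a b u : R) (c : bool).

Definition nonempty_interval (J : R * R * bool) : bool :=
  let: (a, b, c) := J in if c then a <= b else a < b.

Lemma mem_interval_bounds a b c s :
  interval_mem (a, b, c) s -> a <= s <= b.
Proof. by case: c => /= /andP[a_s sb]; apply/andP; split; lra. Qed.

Lemma mem_interval_gt a b c u :
  nonempty_interval (a, b, c) -> u < b -> exists2 s, interval_mem (a, b, c) s & u < s.
Proof.
case: c => /= ab ub; first by exists b; rewrite ?ab ?lexx.
have [au|ua] := leP a u.
- by exists ((u + b) / 2); [apply/andP; split|]; lra.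
- by exists ((a + b) / 2); [apply/andP; split|]; lra.
Qed.

Lemma mem_interval_lt a b c u :
  nonempty_interval (a, b, c) -> a < u -> exists2 t, interval_mem (a, b, c) t & t < u.
Proof.
case: c => /= ab au; first by exists a; rewrite ?ab ?lexx.
have [bu|ub] := leP b u.
- by exists ((a + b) / 2); [apply/andP; split|]; lra.
- by exists ((a + u) / 2); [apply/andP; split|]; lra.
Qed.

Lemma interval_precedesP a b c a' b' c' :
  nonempty_interval (a, b, c) -> nonempty_interval (a', b', c') ->
  reflect (forall s t, interval_mem (a, b, c) s -> interval_mem (a', b', c') t -> s < t)
          ((b < a') || ((b == a') && ~~ (c && c'))).
Proof.
move=> ne ne'; apply: (iffP idP) => [/orP[ba | /andP[/eqP ba cc']] s t | prec].
- by move=> /mem_interval_bounds/andP[_ sb] /mem_interval_bounds/andP[a't _]; lra.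
- by case: c c' ne ne' cc' => [] [] //= _ _ _ /andP[_ sb] /andP[a't _]; lra.
have b_le_a' : b <= a'.
  rewrite leNgt; apply/negP => a'b.
  have [s sJ us] := mem_interval_gt ne (midf_lt a'b).2.
  have [t tJ' tu] := mem_interval_lt ne' (midf_lt a'b).1.
  by have := prec s t sJ tJ'; lra.
rewrite le_eqVlt in b_le_a'; case/orP: b_le_a' => [/eqP ba'|->] //.
rewrite ba' eqxx ltxx /=; apply/negP => /andP[cl cl'].
move: ne ne' prec; rewrite cl cl' ba' /= => ab a'b' /(_ a' a').
by rewrite ab a'b' !lexx => /(_ isT isT); rewrite ltxx.
Qed.

Definition unit_precedes (l px py : R) (cx cy : bool) : bool :=
  (px + l < py) || ((px + l == py) && ~~ (cx && cy)).

End Intervals.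

(* [p x] is the left endpoint of the interval of [x] and [cl x] tells whether
   it is closed. *)
Definition unit_model (R : realType) (T : finType) (lt : rel T)
    (p : T -> R) (cl : T -> bool) (l : R) : Prop :=
  [/\ forall x, nonempty_interval (p x, p x + l, cl x),
      forall x y, lt x y = unit_precedes l (p x) (p y) (cl x) (cl y) &
      forall x y, p x = p y -> cl x = cl y -> x = y].

Lemma unit_OC_model (R : realType) (T : finType) (lt : rel T)
    (I : T -> R * R * bool) (l : R) :
  strict_poset lt -> twin_free lt -> OC_rep lt I ->
  (forall x, interval_length (I x) = l) ->
  unit_model lt (fun x => (I x).1.1) (fun x => (I x).2) l.
Proof.
move=> [irr _] tf [ordered ltI] len.
have Ieq x : I x = ((I x).1.1, (I x).1.1 + l, (I x).2).
  by move: (len x); case: (I x) => [[a b] c] /= <-; rewrite addrC subrK.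
have ne x : nonempty_interval (I x).
  move: (irr x) (ltI x x) (ordered x); case: (I x) => [[a b] []] //= lxx ltIx ab.
  apply: contraFT lxx; rewrite -leNgt => ba; apply/ltIx => s t /andP[a_s sb]; lra.
have ltE x y : lt x y = unit_precedes l (I x).1.1 (I y).1.1 (I x).2 (I y).2.
  have := ne x; have := ne y; have := ltI x y; rewrite (Ieq x) (Ieq y) => {}ltI ney nex.
  by apply/idP/idP => [/ltI/(interval_precedesP nex ney) |
                       /(interval_precedesP nex ney)/ltI].
split=> // [x|x y px py]; first by rewrite -Ieq.
by case: (eqVneq x y) => // /eqP/tf[] z; rewrite !ltE px py.
Qed.

Section UnitModel.
Variables (R : realType) (T : finType) (lt : rel T).
Variables (p : T -> R) (cl : T -> bool) (l : R).
Hypothesis model : unit_model lt p cl l.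

Lemma unit_model_dual : unit_model (fun x y => lt y x) (fun x => - p x) cl l.
Proof.
case: model => ne ltE twin; split=> [x | x y | x y /oppr_inj]; last exact: twin.
- by move: (ne x) => /=; case: (cl x) => /= h; lra.
- rewrite ltE /unit_precedes (andbC (cl y)); congr (_ || (_ && _)).
  + by apply/idP/idP => h; lra.
  + by apply/eqP/eqP => h; lra.
Qed.

(* [x] only witnesses that [T] is inhabited; otherwise [l] is unconstrained. *)
Lemma len_ge0 (x : T) : 0 <= l.
Proof. by case: model => /(_ x) /=; case: (cl x) => /= h _ _; lra. Qed.

Lemma closed_of_len0 x : l = 0 -> cl x.
Proof. by case: model => /(_ x) /=; case: (cl x) => //= h _ _; lra. Qed.

Lemma lt_gap x y : lt x y -> p x + l <= p y.
Proof. by case: model => _ -> _ /orP[|/andP[/eqP-> _]] => [/ltW|]. Qed.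

Lemma lt_touching_not_closed x y : lt x y -> p y = p x + l -> ~~ (cl x && cl y).
Proof. by case: model => _ -> _ /orP[|/andP[_ //]] => h e; move: h; rewrite e ltxx. Qed.

Lemma nlt_overlap x y : ~~ lt x y -> p y <= p x + l.
Proof. by case: model => _ -> _; rewrite negb_or leNgt => /andP[]. Qed.

Lemma nlt_touching_closed x y : ~~ lt x y -> p y = p x + l -> cl x && cl y.
Proof.
by case: model => _ -> _ /[swap] ->; rewrite /unit_precedes eqxx ltxx /= negbK.
Qed.

Lemma eq_of_same_closed_interval x y : p x = p y -> cl x -> cl y -> x = y.
Proof. by case: model => _ _ twin pxy clx cly; apply: twin; rewrite ?clx ?cly. Qed.

Lemma eq_of_same_open_interval x y : p x = p y -> ~~ cl x -> ~~ cl y -> x = y.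
Proof.
by case: model => _ _ twin pxy /negbTE clx /negbTE cly; apply: twin; rewrite ?clx ?cly.
Qed.

Lemma no_chain4_incomparable a b c d x :
  lt a b -> lt b c -> lt c d -> ~~ lt a x -> ~~ lt x d -> False.
Proof.
move=> ab bc cd ax xd.
have := lt_gap ab; have := lt_gap bc; have := lt_gap cd; have := nlt_overlap ax;
have := nlt_overlap xd; have := len_ge0 a => *.
(* The chain from a to d spans 3l, yet fits into the two overlaps of x. *)
have l0 : l = 0 by lra.
have eb : p b = p a + l by lra.
have /negP[] := lt_touching_not_closed ab eb.
by rewrite !(closed_of_len0 _ l0).
Qed.

Lemma chain3_incomparable_eq a b c x y :
  lt a b -> lt b c -> ~~ lt a x -> ~~ lt x c -> ~~ lt a y -> ~~ lt y c -> x = y.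
Proof.
move=> ab bc ax xc ay yc.
have := lt_gap ab; have := lt_gap bc; have := nlt_overlap ax;
have := nlt_overlap xc; have := nlt_overlap ay; have := nlt_overlap yc => *.
have ex : p x = p a + l by lra.
have ey : p y = p a + l by lra.
have /andP[_ clx] := nlt_touching_closed ax ex.
have /andP[_ cly] := nlt_touching_closed ay ey.
by apply: eq_of_same_closed_interval; rewrite ?ex ?ey.
Qed.

Lemma no_zigzag_chain4 a b c d x y :
  lt a b -> lt b c -> lt c d -> ~~ lt a x -> ~~ lt x c -> ~~ lt b y -> ~~ lt y d ->
  False.
Proof.
move=> ab bc cd ax xc b_y yd.
have := lt_gap ab; have := lt_gap bc; have := lt_gap cd; have := nlt_overlap ax;
have := nlt_overlap xc; have := nlt_overlap b_y; have := nlt_overlap yd => *.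
have ey : p y = p b + l by lra.
have ex : p x = p a + l by lra.
have eb : p b = p a + l by lra.
have /andP[clb _] := nlt_touching_closed b_y ey.
have /andP[cla _] := nlt_touching_closed ax ex.
have /negP[] := lt_touching_not_closed ab eb.
by rewrite cla clb.
Qed.

Lemma diamond_incomparable_eq a b c d x :
  lt a b -> lt b d -> lt a c -> lt c d -> ~~ lt a x -> ~~ lt x d -> b = c.
Proof.
move=> ab bd ac cd ax xd.
have := lt_gap ab; have := lt_gap bd; have := lt_gap ac; have := lt_gap cd;
have := nlt_overlap ax; have := nlt_overlap xd => *.
have eb : p b = p a + l by lra.
have ec : p c = p a + l by lra.
have ex : p x = p a + l by lra.
have /andP[cla _] := nlt_touching_closed ax ex.
move: (lt_touching_not_closed ab eb) (lt_touching_not_closed ac ec).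
rewrite cla /= => clb clc.
by apply: eq_of_same_open_interval; rewrite ?eb ?ec.
Qed.

Lemma Y_incomparable_eq a b c d x :
  lt a d -> lt d b -> lt d c -> ~~ lt a x -> ~~ lt x b -> ~~ lt x c -> b = c.
Proof.
move=> ad db dc ax xb xc.
have := lt_gap ad; have := lt_gap db; have := lt_gap dc; have := nlt_overlap ax;
have := nlt_overlap xb; have := nlt_overlap xc => *.
have eb : p b = p x + l by lra.
have ec : p c = p x + l by lra.
have /andP[_ clb] := nlt_touching_closed xb eb.
have /andP[_ clc] := nlt_touching_closed xc ec.
by apply: eq_of_same_closed_interval; rewrite ?eb ?ec.
Qed.

Lemma no_4_plus_1 : ~ contains_induced lt pat_4_1.
Proof.
case=> f [_ fh].
by apply: (@no_chain4_incomparable (f (inZp 0)) (f (inZp 1)) (f (inZp 2)) (f (inZp 3))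
  (f (inZp 4))); rewrite fh.
Qed.

Lemma no_3_plus_1_plus_1 : ~ contains_induced lt pat_3_1_1.
Proof.
case=> f [finj fh].
have : f (inZp 3) = f (inZp 4).
  by apply: (@chain3_incomparable_eq (f (inZp 0)) (f (inZp 1)) (f (inZp 2)));
    rewrite fh.
by move/finj/(congr1 val).
Qed.

Lemma no_Z : ~ contains_induced lt pat_Z.
Proof.
case=> f [_ fh].
by apply: (@no_zigzag_chain4 (f (inZp 0)) (f (inZp 1)) (f (inZp 2)) (f (inZp 3))
  (f (inZp 4)) (f (inZp 5))); rewrite fh.
Qed.

Lemma no_D : ~ contains_induced lt pat_D.
Proof.
case=> f [finj fh].
have : f (inZp 1) = f (inZp 2).
  by apply: (@diamond_incomparable_eq (f (inZp 0)) _ _ (f (inZp 3)) (f (inZp 4)));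
    rewrite fh.
by move/finj/(congr1 val).
Qed.

Lemma no_Y : ~ contains_induced lt pat_Y.
Proof.
case=> f [finj fh].
have : f (inZp 1) = f (inZp 2).
  by apply: (@Y_incomparable_eq (f (inZp 0)) _ _ (f (inZp 3)) (f (inZp 4))); rewrite fh.
by move/finj/(congr1 val).
Qed.

End UnitModel.

Lemma no_Ydual (R : realType) (T : finType) (lt : rel T) (p : T -> R) cl l :
  unit_model lt p cl l -> ~ contains_induced lt pat_Ydual.
Proof.
move=> /unit_model_dual/no_Y + [f [finj fh]]; apply.
by exists f; split=> // u v; apply: fh.
Qed.

Theorem proposition5 (R : realType) (T : finType) (lt : rel T) :
  strict_poset lt -> twin_free lt -> unit_OC_interval_order R lt ->
  ~ contains_induced lt pat_4_1 /\
  ~ contains_induced lt pat_3_1_1 /\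
  ~ contains_induced lt pat_Z /\
  ~ contains_induced lt pat_D /\
  ~ contains_induced lt pat_Y /\
  ~ contains_induced lt pat_Ydual.
Proof.
move=> sp tf [I [l [rep len]]].
have model := unit_OC_model sp tf rep len.
split; first exact: no_4_plus_1 model.
split; first exact: no_3_plus_1_plus_1 model.
split; first exact: no_Z model.
split; first exact: no_D model.
split; first exact: no_Y model.
exact: no_Ydual model.
Qed.
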